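(* Let $p_1,p_2\in\mathcal{P}_{KZ}$ be transcendental periods with $\deg(p_1)\neq\deg(p_2)$. Then $p_1/p_2$ is a transcendental number.
   Context: $\mathbb{R}_{\mathrm{alg}}=\mathbb{R}\cap\overline{\mathbb{Q}}$. Semialgebraic subsets of $\mathbb{R}^n$ are finite unions of finite intersections of sets $\{f=0\}$, $\{g>0\}$ with $f,g\in\mathbb{R}_{\mathrm{alg}}[T_1,\dots,T_n]$; $\mathcal{SA}^n$ denotes those with nonempty interior. A period is a real number $\int_X (P/Q)(x)\,dx$ (absolutely convergent) with $X\in\mathcal{SA}^n$, $P,Q\in\mathbb{R}_{\mathrm{alg}}[T_1,\dots,T_n]$, $Q$ not identically zero on $X$; $\mathcal{P}_{KZ}$ is the set of periods. For a nonzero period $p$ there exists a positive integer $k$ and a compact $K\in\mathcal{SA}^k$ with $|p|=\mathrm{vol}_k(K)$; $\deg(p)$ is the smallest such $k$, and $\deg(0)=0$. *)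

From HB Require Import structures.
From mathcomp Require Import all_boot all_order all_algebra.
From mathcomp Require Import all_classical all_reals all_analysis.
From mathcomp Require mpoly.

Set Implicit Arguments.
Unset Strict Implicit.
Unset Printing Implicit Defensive.

Import Order.TTheory GRing.Theory Num.Theory.
Import numFieldNormedType.Exports.
Local Open Scope classical_set_scope.
Local Open Scope ring_scope.

Section Periods.
Variable R : realType.

Definition algebraic (x : R) : Prop :=
  exists q : {poly rat}, q != 0 /\ root (map_poly ratr q) x.

Definition transcendental (x : R) : Prop := ~ algebraic x.

Definition Ralg : {pred R} := fun x => `[< algebraic x >].

Definition alg_mpoly (n : nat) (f : mpoly.mpoly n R) : Prop :=
  f \is a mpoly.mpolyOver n Ralg.

Definition peval (n : nat) (f : mpoly.mpoly n R) (x : 'rV[R]_n) : R :=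
  mpoly.meval (fun i => x ord0 i) f.

Inductive sa_atom (n : nat) :=
| SAeq of mpoly.mpoly n R
| SApos of mpoly.mpoly n R.

Definition sa_atom_poly n (a : sa_atom n) :=
  match a with SAeq f => f | SApos g => g end.

Definition sa_atom_holds n (a : sa_atom n) (x : 'rV[R]_n) : bool :=
  match a with
  | SAeq f => peval f x == 0
  | SApos g => 0 < peval g x
  end.

(* semialgebraic subsets of R^n: finite unions of finite intersections of
   sets {f = 0}, {g > 0} with f, g in R_alg[T_1..T_n] *)
Definition semialgebraic (n : nat) (X : set 'rV[R]_n) : Prop :=
  exists s : seq (seq (sa_atom n)),
    all (fun c => all (fun a => `[< alg_mpoly (sa_atom_poly a) >]) c) s /\
    X = [set x | has (fun c => all (fun a => sa_atom_holds a x) c) s].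

Definition SA (n : nat) (X : set 'rV[R]_n) : Prop :=
  semialgebraic X /\ (X°) !=set0.

(* Lebesgue integral of a nonnegative function over R^n, computed as an
   iterated one-dimensional Lebesgue integral (Tonelli). *)
Fixpoint iint (n : nat) : ('rV[R]_n -> \bar R) -> \bar R :=
  match n return ('rV[R]_n -> \bar R) -> \bar R with
  | 0 => fun f => f 0
  | n'.+1 => fun f =>
      (\int[@lebesgue_measure R]_(t in [set: R])
         iint (fun x : 'rV[R]_n' => f (row_mx (t%:M : 'rV[R]_1) x)))%E
  end.

Definition vol (k : nat) (K : set 'rV[R]_k) : \bar R :=
  iint (fun x => (\1_K x)%:E).

(* the integrand 1_X * P/Q; note x / 0 = 0 in MathComp, and the zero set of
   Q is Lebesgue-null since Q does not vanish identically on X *)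
Definition integrand (n : nat) (X : set 'rV[R]_n) (P Q : mpoly.mpoly n R)
  (x : 'rV[R]_n) : R :=
  \1_X x * (peval P x / peval Q x).

Definition is_period (p : R) : Prop :=
  exists (n : nat) (X : set 'rV[R]_n) (P Q : mpoly.mpoly n R),
    (0 < n)%N /\ SA X /\ alg_mpoly P /\ alg_mpoly Q /\
    (exists2 x, X x & peval Q x != 0) /\
    (iint (fun x => `|integrand X P Q x|%:E) < +oo)%E /\
    p = fine (iint (fun x => (Num.max (integrand X P Q x) 0)%:E))
        - fine (iint (fun x => (Num.max (- integrand X P Q x) 0)%:E)).

Definition vol_repr (p : R) (k : nat) : Prop :=
  (0 < k)%N /\
  exists K : set 'rV[R]_k, compact K /\ SA K /\ vol K = (`|p|)%:E.

Definition vol_repr_pred (p : R) : pred nat := fun k => `[< vol_repr p k >].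

(* deg p = smallest k with |p| = vol_k(K), K compact in SA^k; deg 0 = 0
   (no such k exists for p = 0 since sets in SA^k have positive volume) *)
Definition deg (p : R) : nat :=
  match pselect (exists k, vol_repr_pred p k) with
  | left h => ex_minn h
  | right _ => 0%N
  end.

End Periods.

(* If p1 / p2 were algebraic, it would be a nonzero algebraic number a with
   p1 = a * p2.  Stretching the first coordinate by |a| maps a compact set in
   SA^k to a compact set in SA^k (its defining polynomials undergo a linear
   substitution with algebraic coefficients) and multiplies its k-volume by
   |a|, by the one-dimensional change of variables in the outermost integral.
   Hence |p| is a k-volume exactly when |a p| is, so deg p1 = deg p2. *)

From HB Require Import structures.
From mathcomp Require Import all_boot all_order all_algebra.
From mathcomp Require Import all_classical all_reals all_analysis.
From mathcomp Require Import measurable_realfun.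
From mathcomp Require mpoly.
Import (canonicals, coercions) mpoly.

Set Implicit Arguments.
Unset Strict Implicit.
Unset Printing Implicit Defensive.
Import Order.TTheory GRing.Theory Num.Theory.
Import numFieldNormedType.Exports.
Local Open Scope classical_set_scope.
Local Open Scope ring_scope.

Section algebraic_numbers.
Variable R : realType.

Lemma algebraicE (x : R) :
  algebraic x <-> algebraicOver (ratr : {rmorphism rat -> R}) x.
Proof. by split=> [[q [q0 qx]]|[q q0 qx]]; exists q. Qed.

Lemma RalgP (x : R) : reflect (algebraic x) (x \in @Ralg R).
Proof. by rewrite unfold_in; apply: (iffP (asboolP _)). Qed.

Lemma Ralg_divring_closed : divring_closed (@Ralg R).
Proof.
split.
- by apply/RalgP/algebraicE; exact: algebraic1.
- move=> x y /RalgP/algebraicE Rx /RalgP/algebraicE Ry.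
  by apply/RalgP/algebraicE; exact: algebraic_sub.
- move=> x y /RalgP/algebraicE Rx /RalgP/algebraicE Ry.
  by apply/RalgP/algebraicE; exact: algebraic_div.
Qed.

HB.instance Definition _ :=
  GRing.isDivringClosed.Build R (@Ralg R) Ralg_divring_closed.

Lemma Ralg_norm (x : R) : x \in @Ralg R -> `|x| \in @Ralg R.
Proof. by move=> Rx; case: ler0P => _; rewrite ?rpredN. Qed.

Lemma algebraicV (x : R) : algebraic x -> algebraic x^-1.
Proof. by move=> /RalgP Rx; apply/RalgP; rewrite rpredV. Qed.

End algebraic_numbers.

Section stretch.
Variables (R : realType) (n : nat).

Definition stretch (c : R) (y : 'rV[R]_n.+1) : 'rV[R]_n.+1 :=
  \row_j ((if j == ord0 then c else 1) * y ord0 j).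

Lemma stretchM c d y : stretch c (stretch d y) = stretch (c * d) y.
Proof.
by apply/rowP => j; rewrite !mxE; case: ifP => _; rewrite ?mulrA ?mul1r.
Qed.

Lemma stretch1 y : stretch 1 y = y.
Proof. by apply/rowP => j; rewrite !mxE; case: ifP => _; rewrite mul1r. Qed.

Lemma stretchK c : c != 0 -> cancel (stretch c) (stretch c^-1).
Proof. by move=> c0 y; rewrite stretchM mulVf ?stretch1. Qed.

Lemma stretchVK c : c != 0 -> cancel (stretch c^-1) (stretch c).
Proof. by move=> c0 y; rewrite stretchM mulfV ?stretch1. Qed.

Lemma stretch_row_mx c t (x : 'rV[R]_n) :
  stretch c (row_mx (t%:M : 'rV[R]_1) x) = row_mx ((c * t)%:M : 'rV[R]_1) x.
Proof.
apply/rowP => j; rewrite !mxE; case: splitP => j1 ej.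
  have -> : j = ord0 by apply/val_inj; rewrite /= ej (ord1 j1).
  by rewrite eqxx (ord1 j1) !mxE !mulr1n.
have /negbTE-> : j != ord0 by rewrite -val_eqE /= ej.
by rewrite mul1r.
Qed.

Lemma stretchE c y :
  stretch c y = y + ((c - 1) * y ord0 ord0) *: delta_mx ord0 ord0.
Proof.
apply/rowP => j; rewrite !mxE (ord1 0) /=.
case: eqP => [->|_]; last by rewrite mulr0 addr0 mul1r.
by rewrite mulr1 mulrBl mul1r addrC subrK.
Qed.

Lemma stretch_continuous c : continuous (stretch c).
Proof.
have -> : stretch c = (id : 'rV[R]_n.+1 -> 'rV[R]_n.+1)
    + (fun y => ((c - 1) * y ord0 ord0) *: delta_mx ord0 ord0).
  by apply/funext => y; exact: stretchE.
move=> y; apply: continuousD => //; apply: continuousZ; last exact: cst_continuous.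
by apply: continuousM; [exact: cst_continuous | exact: coord_continuous].
Qed.

Lemma compact_stretch_preimage c (K : set 'rV[R]_n.+1) :
  c != 0 -> compact K -> compact (stretch c @^-1` K).
Proof.
move=> c0 cK; have -> : stretch c @^-1` K = stretch c^-1 @` K.
  apply/seteqP; split=> y /=; first by move=> Ky; exists (stretch c y); rewrite ?stretchK.
  by case=> z Kz <-; rewrite stretchVK.
apply: continuous_compact => //; apply: continuous_subspaceT.
exact: stretch_continuous.
Qed.

Lemma interior_stretch_preimage c (K : set 'rV[R]_n.+1) :
  c != 0 -> K° !=set0 -> (stretch c @^-1` K)° !=set0.
Proof.
move=> c0 [x Kx]; exists (stretch c^-1 x).
by apply: stretch_continuous; rewrite stretchVK.
Qed.

End stretch.

Section stretch_semialgebraic.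
Variables (R : realType) (n : nat).
Local Notation mpoly := (mpoly.mpoly n.+1 R).

Definition stretch_mpoly (c : R) (f : mpoly) : mpoly :=
  mpoly.comp_mpoly [tuple mpoly.mpolyC n.+1 (if i == ord0 then c else 1)
                            * mpoly.mpolyX R (mpoly.mnm1 i) | i < n.+1] f.

Lemma peval_stretch_mpoly c f y :
  peval (stretch_mpoly c f) y = peval f (stretch c y).
Proof.
rewrite /peval mpoly.comp_mpoly_meval; apply: mpoly.meval_eq => i.
by rewrite tnth_mktuple mpoly.mevalM mpoly.mevalC mpoly.mevalXU !mxE.
Qed.

Lemma alg_stretch_mpoly c f :
  c \in @Ralg R -> alg_mpoly f -> alg_mpoly (stretch_mpoly c f).
Proof.
rewrite /alg_mpoly => Rc /mpoly.mpolyOverP Rf.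
rewrite /stretch_mpoly mpoly.comp_mpolyE; apply: rpred_sum => m _.
apply: mpoly.mpolyOverZ => //; apply: rpred_prod => i _; apply: rpredX.
rewrite tnth_mktuple rpredM ?mpoly.mpolyOverX // mpoly.mpolyOverC.
by case: ifP; rewrite ?rpred1.
Qed.

Definition stretch_atom (c : R) (a : sa_atom R n.+1) : sa_atom R n.+1 :=
  match a with
  | SAeq f => SAeq (stretch_mpoly c f)
  | SApos g => SApos (stretch_mpoly c g)
  end.

Lemma stretch_atom_holds c a y :
  sa_atom_holds (stretch_atom c a) y = sa_atom_holds a (stretch c y).
Proof. by case: a => f /=; rewrite peval_stretch_mpoly. Qed.

Lemma sa_atom_poly_stretch c a :
  sa_atom_poly (stretch_atom c a) = stretch_mpoly c (sa_atom_poly a).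
Proof. by case: a. Qed.

Lemma semialgebraic_stretch_preimage c (K : set 'rV[R]_n.+1) :
  c \in @Ralg R -> semialgebraic K -> semialgebraic (stretch c @^-1` K).
Proof.
move=> Rc [s [Rs ->]]; exists (map (map (stretch_atom c)) s); split.
  rewrite all_map; apply: sub_all Rs => cl /=; rewrite all_map.
  apply: sub_all => a /asboolP Ra /=; apply/asboolP.
  by rewrite sa_atom_poly_stretch; exact: alg_stretch_mpoly.
have holds_stretch y :
    has (fun cl => all (fun a => sa_atom_holds a y) cl) (map (map (stretch_atom c)) s)
    = has (fun cl => all (fun a => sa_atom_holds a (stretch c y)) cl) s.
  rewrite has_map; apply: eq_has => cl /=; rewrite all_map.
  by apply: eq_all => a; exact: stretch_atom_holds.
by apply/seteqP; split=> y /=; rewrite holds_stretch.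
Qed.

End stretch_semialgebraic.

Section comp_nnsfun.
Import HBNNSimple.
Context d1 d2 (T1 : measurableType d1) (T2 : measurableType d2) (R : realType).
Variables (h : {nnsfun T2 >-> R}) (phi : {mfun T1 >-> T2}).

Definition comp_nnsfun_fun : T1 -> R := h \o phi.

Let comp_measurable : measurable_fun setT comp_nnsfun_fun.
Proof. exact: measurableT_comp. Qed.

HB.instance Definition _ := isMeasurableFun.Build _ _ _ _ comp_nnsfun_fun comp_measurable.

Let comp_finite_range : finite_set (range comp_nnsfun_fun).
Proof. by apply: (@sub_finite_set _ _ (range h)) => // _ [x _ <-]; exists (phi x). Qed.

HB.instance Definition _ := FiniteImage.Build _ _ comp_nnsfun_fun comp_finite_range.

Let comp_ge0 x : 0 <= comp_nnsfun_fun x. Proof. exact: fun_ge0. Qed.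

HB.instance Definition _ := isNonNegFun.Build _ _ comp_nnsfun_fun comp_ge0.

Definition comp_nnsfun : {nnsfun T1 >-> R} := comp_nnsfun_fun.
End comp_nnsfun.

Section dilation.
Context (R : realType) (c : R).

Definition dilation : measurableTypeR R -> measurableTypeR R := *%R c.

HB.instance Definition _ :=
  isMeasurableFun.Build _ _ _ _ dilation (@mulrl_measurable R setT c).
End dilation.

Section lebesgue_dilation.
Context (R : realType) (c : R) (c0 : 0 < c).
Local Notation mu := (@lebesgue_measure R).

Lemma lebesgue_measure_dilation (A : set R) : measurable A ->
  (mu A = c%:E * mu (dilation c @^-1` A))%E.
Proof.
move=> mA; pose cnn : {nonneg R} := NngNum (ltW c0).
rewrite (@lebesgue_measure_unique R (mscale cnn (pushforward mu (dilation c))) _ A mA) //.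
move=> _ [[a b]] _ <-.
change (mu `]a, b] = c%:E * mu (dilation c @^-1` `]a, b]))%E.
have -> : dilation c @^-1` `]a, b] = `]a / c, b / c]%classic.
  apply/seteqP; split => x /=; rewrite !in_itv /= => /andP[ax xb]; apply/andP; split.
  - by rewrite ltr_pdivrMr // mulrC.
  - by rewrite ler_pdivlMr // mulrC.
  - by rewrite -ltr_pdivrMl // mulrC.
  - by rewrite -ler_pdivlMl // mulrC.
rewrite /= !lebesgue_measure_itv /= !lte_fin ltr_pM2r ?invr_gt0 //.
case: ifP => _; last by rewrite mule0.
by rewrite -!EFinD -EFinM -mulrBl mulrCA mulfV ?gt_eqF // mulr1.
Qed.

Import HBNNSimple.

Lemma sintegral_dilation (h : {nnsfun (measurableTypeR R) >-> R}) :
  (sintegral mu h = c%:E * sintegral mu (comp_nnsfun h (dilation c)))%E.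
Proof.
pose cnn : {nonneg R} := NngNum (ltW c0).
have int_sintegral (f : {nnsfun (measurableTypeR R) >-> R}) :
    (\int[mu]_x (f x)%:E = sintegral mu f)%E.
  by rewrite (integral_nnsfun _ measurableT) patch_setT.
rewrite -!int_sintegral.
rewrite (eq_measure_integral (mscale cnn (pushforward mu (dilation c)))); last first.
  by move=> A mA _; exact: lebesgue_measure_dilation.
have mh : measurable_fun setT (fun x => (h x)%:E).
  by apply/measurable_EFinP; exact: measurable_funPT.
rewrite ge0_integral_mscale //=; last by move=> x _; rewrite lee_fin.
by congr (_ * _)%E; rewrite ge0_integral_pushforward // => x _; rewrite lee_fin.
Qed.

Lemma le_integral_dilation (g : R -> \bar R) : (forall x, 0 <= g x)%E ->
  (\int[mu]_t g t <= c%:E * \int[mu]_t g (c * t)%R)%E.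
Proof.
move=> g0; rewrite (ge0_integralTE mu g0) (ge0_integralTE mu (fun x => g0 (c * x)%R)).
apply: ge_ereal_sup => _ [h hg <-].
rewrite sintegral_dilation; apply: lee_wpmul2l; first by rewrite lee_fin ltW.
by apply: ereal_sup_ubound; exists (comp_nnsfun h (dilation c)) => // x; exact: hg.
Qed.
End lebesgue_dilation.

Lemma integral_dilation (R : realType) (c : R) (g : R -> \bar R) : 0 < c ->
  (forall x, 0 <= g x)%E ->
  (\int[lebesgue_measure]_t g (t / c)%R = c%:E * \int[lebesgue_measure]_t g t)%E.
Proof.
move=> c0 g0; apply/eqP; rewrite eq_le; apply/andP; split.
  have := le_integral_dilation c0 (fun t => g0 (t / c)).
  by under [X in (_ <= _ * X)%E -> _]eq_integral do rewrite mulrC mulKf ?gt_eqF //.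
have ic0 : 0 < c^-1 by rewrite invr_gt0.
have := le_integral_dilation ic0 g0.
under [X in (_ <= _ * X)%E -> _]eq_integral do rewrite mulrC.
move=> le_gc; rewrite -[X in (_ <= X)%E]mul1e -(mulfV (lt0r_neq0 c0)) EFinM -muleA.
by apply: lee_wpmul2l; rewrite // lee_fin ltW.
Qed.

Section volume.
Variable R : realType.

Lemma iint_ge0 n (f : 'rV[R]_n -> \bar R) :
  (forall x, 0 <= f x)%E -> (0 <= iint f)%E.
Proof.
elim: n f => [|n IH] f f0 /=; first exact: f0.
by apply: integral_ge0 => t _; apply: IH.
Qed.

Lemma vol_stretch n (c : R) (K : set 'rV[R]_n.+1) : 0 < c ->
  vol (stretch c^-1 @^-1` K) = (c%:E * vol K)%E.
Proof.
move=> c0; pose G t := iint (fun x : 'rV[R]_n => (\1_K (row_mx t%:M x))%:E).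
rewrite /vol /= -/(G _) -(integral_dilation c0 (g := G)); last first.
  by move=> t; apply: iint_ge0 => x; rewrite lee_fin.
apply: eq_integral => t _; congr iint; apply/funext => x.
by rewrite mulrC -stretch_row_mx.
Qed.

Lemma vol_repr_scale (p a : R) k :
  algebraic a -> a != 0 -> vol_repr p k -> vol_repr (a * p) k.
Proof.
move=> /RalgP Ra a0 [k0 [K [cK [[saK intK] volK]]]]; split=> //.
case: k k0 K cK saK intK volK => // n _ K cK saK intK volK.
have na0 : 0 < `|a| by rewrite normr_gt0.
have nVa0 : `|a|^-1 != 0 by rewrite invr_eq0 gt_eqF.
exists (stretch `|a|^-1 @^-1` K); split; first exact: compact_stretch_preimage.
split; first split.
- by apply: semialgebraic_stretch_preimage => //; rewrite rpredV Ralg_norm.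
- exact: interior_stretch_preimage.
- by rewrite vol_stretch // volK normrM EFinM.
Qed.

Lemma deg_scale (p a : R) : algebraic a -> a != 0 -> deg (a * p) = deg p.
Proof.
move=> Ra a0; suff E : vol_repr_pred (a * p) = vol_repr_pred p by rewrite /deg E.
apply/funext => k; rewrite /vol_repr_pred; congr asbool; apply/propext; split.
  move=> /(vol_repr_scale (algebraicV Ra)); rewrite mulKf //; apply.
  by rewrite invr_eq0.
exact: vol_repr_scale.
Qed.

End volume.

Unset Implicit Arguments.

Theorem mainTheorem9 (R : realType) (p1 p2 : R) :
  is_period p1 -> is_period p2 ->
  transcendental p1 -> transcendental p2 ->
  deg p1 <> deg p2 ->
  transcendental (p1 / p2).
Proof.
move=> _ _ tp1 tp2 deg12 alg_q.
have neq0 (p : R) : transcendental p -> p != 0.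
  by move=> tp; apply: contra_notN tp => /eqP ->; apply/RalgP; exact: rpred0.
apply: deg12; rewrite -[p1](divfK (neq0 _ tp2)) deg_scale //.
by rewrite mulf_neq0 ?invr_eq0 ?neq0.
Qed.
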